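(* Let $k$ be a nonnegative integer and let $i,j\geq k+2$ be integers. Then $$R_k^{\mathcal{CO}}(i,j)=1+\frac{(i-1)(j-1)-\{i-1\}\{j-1\}}{k+1},$$ where $\{x\}\in\{0,1,\dots,k\}$ denotes the residue of the integer $x$ modulo $k+1$ and $\mathcal{CO}$ is the class of cographs.
   Context: All graphs are finite and simple. For a graph $G$ and a nonnegative integer $k$, a $k$-sparse $j$-set is a set of $j$ vertices of $G$ inducing a subgraph of maximum degree at most $k$; a $k$-dense $i$-set is a set of $i$ vertices of $G$ that is $k$-sparse in the complement of $G$. For a graph class $\mathcal{G}$, $R_k^{\mathcal{G}}(i,j)$ is the smallest natural number $n$ such that every graph on $n$ vertices in $\mathcal{G}$ has either a $k$-dense $i$-set or a $k$-sparse $j$-set. A cograph is a graph containing no induced path on four vertices (equivalently, the complement of every connected induced subgraph on at least two vertices is disconnected). *)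

From mathcomp Require Import all_boot.
Set Implicit Arguments. Unset Strict Implicit. Unset Printing Implicit Defensive.

Definition simple_graph (n : nat) (e : rel 'I_n) : Prop :=
  symmetric e /\ irreflexive e.

Definition cograph (n : nat) (e : rel 'I_n) : Prop :=
  ~ exists a b c d : 'I_n,
      [/\ uniq [:: a; b; c; d],
          [&& e a b, e b c & e c d] &
          [&& ~~ e a c, ~~ e b d & ~~ e a d]].

Definition compl_rel (n : nat) (e : rel 'I_n) : rel 'I_n :=
  fun x y => (x != y) && ~~ e x y.

Definition k_sparse_set (n : nat) (e : rel 'I_n) (k j : nat) (S : {set 'I_n}) : Prop :=
  #|S| = j /\ forall x, x \in S -> #|[set y in S | e x y]| <= k.

Definition k_dense_set (n : nat) (e : rel 'I_n) (k i : nat) (S : {set 'I_n}) : Prop :=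
  k_sparse_set (compl_rel e) k i S.

Definition ramsey_prop_cograph (k i j n : nat) : Prop :=
  forall e : rel 'I_n, simple_graph e -> cograph e ->
    (exists S, k_dense_set e k i S) \/ (exists S, k_sparse_set e k j S).

Definition is_ramsey_cograph (k i j N : nat) : Prop :=
  ramsey_prop_cograph k i j N /\ forall n, n < N -> ~ ramsey_prop_cograph k i j n.

From Stdlib Require Import Classical FunctionalExtensionality.
From mathcomp Require Import all_boot zify.
Set Implicit Arguments. Unset Strict Implicit. Unset Printing Implicit Defensive.

(* Write a = i - 1, b = j - 1, m = k + 1 and F(a, b) = (a b - {a}{b}) / m.
   Upper bound: a cograph on at least two vertices is disconnected or has a
   disconnected complement.  If it splits into parts A and B with no edges
   between them, k-sparse sets of A and B combine, so the sparse bounds b1 of A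
   and b - b1 of B add up to b while A and B keep the dense bound a; induction
   and the superadditivity of F(a, _) give at most F(a, b) vertices, and the
   complement case follows by exchanging a and b.
   Lower bound: with a = p m + r and b = q m + s, the disjoint union of q
   copies of the join of K_r with m independent vertices and of a clique K_s
   (if p = 1), resp. of q - 1 cliques K_a and the complement of the previous
   graph with (p, r) and (q, s) exchanged (if p >= 2), is a cograph on
   F(a, b) vertices with no k-dense (a + 1)-set and no k-sparse (b + 1)-set. *)

(** * Sparse sets *)

Section Sparse.
Variable T : finType.
Implicit Types (e : rel T) (S U V A X : {set T}).

Definition compl_graph e : rel T := fun x y => (x != y) && ~~ e x y.

Definition P4_free e : Prop :=
  ~ exists a b c d : T,
      [/\ uniq [:: a; b; c; d],
          [&& e a b, e b c & e c d] &
          [&& ~~ e a c, ~~ e b d & ~~ e a d]].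

Definition sparse e k S : bool := [forall x in S, #|[set y in S | e x y]| <= k].

Definition sparse_le e k U b : Prop :=
  forall S, S \subset U -> sparse e k S -> #|S| <= b.

Definition separates e U A : Prop :=
  [/\ A \subset U, A != set0, A != U &
      forall x y, x \in A -> y \in U :\: A -> ~~ e x y].

Lemma compl_graph_sym e : symmetric e -> symmetric (compl_graph e).
Proof. by move=> e_sym x y; rewrite /compl_graph eq_sym e_sym. Qed.

Lemma compl_graph_irr e : irreflexive (compl_graph e).
Proof. by move=> x; rewrite /compl_graph eqxx. Qed.

Lemma compl_graphK e : irreflexive e -> compl_graph (compl_graph e) = e.
Proof.
move=> e_irr; apply: functional_extensionality => x.
apply: functional_extensionality => y.
by rewrite /compl_graph; case: eqP => [->|_]; rewrite ?e_irr ?negbK.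
Qed.

(* An induced P4 a-b-c-d of the complement is the induced P4 b-d-a-c of e. *)
Lemma P4_free_compl e : symmetric e -> P4_free e -> P4_free (compl_graph e).
Proof.
move=> e_sym e_P4 [a [b [c [d [abcd /and3P[ab bc cd] /and3P[ac bd ad]]]]]].
apply: e_P4; exists b, d, a, c.
move: abcd; rewrite /= !inE !negb_or andbT.
case/and3P=> [/and3P[a_b a_c a_d] /andP[b_c b_d] c_d].
move: ab bc cd ac bd ad; rewrite /compl_graph a_b a_c a_d b_c b_d c_d /= !negbK.
move=> ab bc cd ac bd ad; split.
- by rewrite (eq_sym b a) a_b (eq_sym d a) a_d (eq_sym d c) c_d.
- by rewrite bd (e_sym d a) ad ac.
- by rewrite (e_sym b a) ab (e_sym d c) cd bc.
Qed.

Lemma sparseS e k S S' : S' \subset S -> sparse e k S -> sparse e k S'.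
Proof.
move=> sS'S /forall_inP spS; apply/forall_inP => x xS'.
apply: leq_trans (spS x (subsetP sS'S x xS')).
apply/subset_leq_card/subsetP => y; rewrite !inE => /andP[yS' ->].
by rewrite (subsetP sS'S y yS').
Qed.

Lemma sparse0 e k : sparse e k set0.
Proof. by apply/forall_inP => x; rewrite inE. Qed.

Lemma sparse_small e k S : irreflexive e -> #|S| <= k.+1 -> sparse e k S.
Proof.
move=> e_irr cardS; apply/forall_inP => x xS.
have : [set y in S | e x y] \subset S :\ x.
  apply/subsetP => y; rewrite !inE => /andP[-> exy]; rewrite andbT.
  by apply: contraTneq exy => ->; rewrite e_irr.
by move/subset_leq_card; rewrite (cardsD1 x S) xS in cardS; lia.
Qed.

Lemma sparseU e k S1 S2 : symmetric e ->
  (forall x y, x \in S1 -> y \in S2 -> ~~ e x y) ->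
  sparse e k S1 -> sparse e k S2 -> sparse e k (S1 :|: S2).
Proof.
move=> e_sym no_edge /forall_inP sp1 /forall_inP sp2; apply/forall_inP => x.
rewrite inE => /orP[x1|x2]; [apply: leq_trans (sp1 x x1) | apply: leq_trans (sp2 x x2)];
  apply/subset_leq_card/subsetP => y; rewrite !inE => /andP[/orP[y1|y2] exy];
  rewrite ?y1 ?y2 ?exy //.
- by have := no_edge x y x1 y2; rewrite exy.
- by have := no_edge y x y1 x2; rewrite e_sym exy.
Qed.

Lemma sparse_leS e k U V b : V \subset U -> sparse_le e k U b -> sparse_le e k V b.
Proof. by move=> sVU spU S sSV; apply: spU; apply: subset_trans sVU. Qed.

Lemma sparse_leW e k U b b' : b <= b' -> sparse_le e k U b -> sparse_le e k U b'.
Proof. by move=> le_bb' spU S sSU spS; apply: leq_trans le_bb'; apply: spU. Qed.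

Lemma exists_subset_card S t :
  t <= #|S| -> exists2 S' : {set T}, S' \subset S & #|S'| = t.
Proof.
case/card_geqP=> s [s_uniq <- sub_s]; exists [set x in s].
  by apply/subsetP => x; rewrite inE => /sub_s.
by rewrite cardsE; apply/card_uniqP.
Qed.

Lemma sparse_le_card e k U b : irreflexive e -> sparse_le e k U b -> b <= k -> #|U| <= b.
Proof.
move=> e_irr spU bk; rewrite leqNgt; apply/negP => /exists_subset_card[S sSU cardS].
have := spU S sSU (sparse_small e_irr _); rewrite cardS; lia.
Qed.

Lemma card_sparse_universal e k X x0 : sparse e k X -> x0 \in X ->
  (forall y, y \in X -> y != x0 -> e x0 y) -> #|X| <= k.+1.
Proof.
move=> /forall_inP spX x0X univ; have := spX x0 x0X.
have : X :\ x0 \subset [set y in X | e x0 y].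
  by apply/subsetP => y; rewrite !inE => /andP[yx0 yX]; rewrite yX univ.
by move/subset_leq_card; rewrite (cardsD1 x0 X) x0X; lia.
Qed.

Lemma card_dense_nbrs e k S u : sparse (compl_graph e) k S -> u \in S ->
  #|S| <= k.+1 + #|[set y in S | e u y]|.
Proof.
move=> /forall_inP dnS uS; have := dnS u uS.
set N' := [set y in S | compl_graph e u y]; set N := [set y in S | e u y].
have : S \subset u |: (N' :|: N).
  apply/subsetP => y yS; rewrite !inE yS /compl_graph /=.
  by case: eqVneq => //= _; case: (e u y).
move/subset_leq_card => le_S.
have [le_uN _] := leq_card_setU [set u] (N' :|: N).
have [le_N'N _] := leq_card_setU N' N.
by rewrite cards1 in le_uN; lia.
Qed.

(* A dense set meeting two classes of a labelling respected by the edges is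
   covered by the non-neighbourhoods of one vertex in each class. *)
Lemma card_dense_across (J : eqType) (L : T -> J) e k S x y :
  (forall u v, e u v -> L u = L v) -> sparse (compl_graph e) k S ->
  x \in S -> y \in S -> L x != L y -> #|S| <= k + k.
Proof.
move=> eL /forall_inP dnS xS yS Lxy.
have := dnS x xS; have := dnS y yS.
set Nx := [set z in S | compl_graph e x z]; set Ny := [set z in S | compl_graph e y z].
have nonadj w z : L w != L z -> compl_graph e w z.
  move=> Lwz; apply/andP; split; first by apply: contraNneq Lwz => ->.
  by apply: contra Lwz => /eL ->.
have : S \subset Nx :|: Ny.
  apply/subsetP => z zS; rewrite !inE zS /=.
  case: (eqVneq (L x) (L z)) => [Lxz|/nonadj-> //].
  by rewrite (nonadj y) ?orbT // -Lxz eq_sym.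
by move/subset_leq_card; have [le_xy _] := leq_card_setU Nx Ny; lia.
Qed.

Lemma card_le_image n (f : 'I_n -> T) X :
  (forall x, x \in X -> exists z, x = f z) -> #|X| <= n.
Proof.
move=> Xf; rewrite -[n]card_ord -cardsT.
apply: leq_trans (leq_imset_card f _); apply/subset_leq_card/subsetP => x.
by case/Xf=> z ->; apply: imset_f.
Qed.

Lemma sparse_le_classes (J : finType) (L : T -> J) e k (bnd : J -> nat) :
  (forall j, sparse_le e k [set x | L x == j] (bnd j)) -> sparse_le e k setT (\sum_j bnd j).
Proof.
move=> spJ S _ spS; rewrite -sum1_card (partition_big L xpredT) //=.
apply: leq_sum => j _; rewrite sum1dep_card.
apply: leq_trans (spJ j [set x in S | L x == j] _ _).
- by apply/eq_leq/eq_card => x; rewrite !inE.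
- by apply/subsetP => x; rewrite !inE => /andP[].
- by apply: sparseS spS; apply/subsetP => x; rewrite inE => /andP[].
Qed.

End Sparse.

Lemma sparse_imset (T T' : finType) (h : T -> T') (e : rel T) (e' : rel T') k S :
  injective h -> (forall x y, e x y = e' (h x) (h y)) ->
  sparse e k S -> sparse e' k (h @: S).
Proof.
move=> h_inj ee' /forall_inP spS; apply/forall_inP => _ /imsetP[x xS ->].
apply: leq_trans (spS x xS); rewrite -(card_imset _ h_inj).
apply/subset_leq_card/subsetP => _ /setIdP[/imsetP[y yS ->]].
by rewrite -ee' => exy; apply: imset_f; rewrite inE yS.
Qed.

Lemma card_sparse_inr (A B : finType) (R : rel (A + B)) (R' : rel B) k b (X : {set A + B}) :
  (forall w w', R (inr w) (inr w') = R' w w') -> sparse_le R' k setT b ->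
  sparse R k X -> (forall x, x \in X -> exists w, x = inr w) -> #|X| <= b.
Proof.
move=> RR' spB /forall_inP spX Xr; set Y := [set w | inr w \in X].
have -> : X = inr @: Y.
  apply/setP => x; apply/idP/imsetP => [xX | [w + ->]]; last by rewrite inE.
  by have [w xw] := Xr x xX; exists w; rewrite // inE -xw.
rewrite card_imset; last exact: inr_inj.
apply: spB => //; apply/forall_inP => w; rewrite inE => wX.
apply: leq_trans (spX _ wX); rewrite -(card_imset _ (@inr_inj A B)).
apply/subset_leq_card/subsetP => _ /imsetP[w' + ->]; rewrite !inE => /andP[w'X].
by rewrite RR' w'X.
Qed.

(** * Decomposition of cographs *)

Section Decomposition.
Variables (T : finType) (e : rel T).
Hypotheses (e_sym : symmetric e) (e_P4 : P4_free e).
Implicit Types (U X Y : {set T}) (v : T).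

Lemma exists_nbr_in_part U X Y v :
  ~ (exists A, separates e U A) -> X \subset U -> X != set0 -> v \in U -> v \notin X ->
  (forall w, w \in U -> [|| w == v, w \in X | w \in Y]) ->
  (forall x y, x \in X -> y \in Y -> ~~ e x y) ->
  exists2 z, z \in X & e v z.
Proof.
move=> U_conn sXU X0 vU vX partU noXY; apply/exists_inP; apply: contraT => /exists_inPn nonbr.
case: U_conn; exists X; split => //.
- by apply: contraNneq vX => ->.
- move=> x y xX /setDP[yU yX].
  case/or3P: (partU y yU) => [/eqP->|yX'|/(noXY x y xX)//]; first by rewrite e_sym nonbr.
  by rewrite yX' in yX.
Qed.

(* Either the non-neighbours of v in X separate U, or an edge x-w leaving
   them yields the induced path x-w-v-z. *)
Lemma separates_nonnbrs U X Y v x0 z :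
  v \in U -> v \notin X -> v \notin Y -> X \subset U ->
  (forall w, w \in U -> [|| w == v, w \in X | w \in Y]) ->
  (forall x y, x \in X -> y \in Y -> ~~ e x y) ->
  x0 \in X -> ~~ e v x0 -> z \in Y -> e v z -> exists A, separates e U A.
Proof.
move=> vU vX vY sXU partU noXY x0X vx0 zY vz.
set M := [set x in X | ~~ e v x].
have [/forall_inP sepM|] := boolP [forall x in M, forall w in U :\: M, ~~ e x w].
  exists M; split.
  - by apply/subsetP => x /setIdP[/(subsetP sXU)].
  - by apply/set0Pn; exists x0; rewrite inE x0X.
  - by apply: contraNneq vX => MU; move: vU; rewrite -MU inE => /andP[].
  - by move=> x w xM wUM; move/forall_inP: (sepM x xM); apply.
case/forall_inPn=> x xM /forall_inPn[w /setDP[wU wM]]; rewrite negbK => xw.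
move: xM; rewrite inE => /andP[xX vx].
have wv : w != v by apply: contraNneq vx => <-; rewrite e_sym.
have wX : w \in X.
  case/or3P: (partU w wU) => [/eqP wv'|//|wY]; first by rewrite wv' eqxx in wv.
  by have := noXY x w xX wY; rewrite xw.
move: wM; rewrite inE wX negbK /= => vw.
case: e_P4; exists x, w, v, z; split.
- rewrite /= !inE !negb_or andbT wv.
  have -> : x != w by apply: contraNneq vx => ->.
  have -> : x != v by apply: contraNneq vX => <-.
  have -> : x != z by apply: contraNneq vx => ->.
  have -> : w != z by apply: contraTneq xw => ->; apply: noXY.
  by apply: contraNneq vY => ->.
- by rewrite xw e_sym vw vz.
- by rewrite e_sym vx (noXY w z wX zY) (noXY x z xX zY).
Qed.

Lemma exists_nonnbr U v :
  ~ (exists A, separates (compl_graph e) U A) -> v \in U -> U != [set v] ->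
  exists2 x, x \in U :\ v & ~~ e v x.
Proof.
move=> U_coconn vU Uv; apply/exists_inP; apply: contraT => /exists_inPn nbrs.
case: U_coconn; exists [set v]; split.
- by rewrite sub1set.
- by apply/set0Pn; exists v; rewrite inE.
- by rewrite eq_sym.
- move=> x y /set1P-> yUv.
  by rewrite /compl_graph negb_and negbK (negbNE (nbrs y yUv)) orbT.
Qed.

Lemma separates_insert U A v :
  v \in U -> separates e (U :\ v) A ->
  (exists A, separates e U A) \/ (exists A, separates (compl_graph e) U A).
Proof.
move=> vU [sAU' A0 AU' noAB].
have [|U_conn] := classic (exists A, separates e U A); first by left.
right; apply: NNPP => U_coconn.
set B := (U :\ v) :\: A.
have sAU : A \subset U := subset_trans sAU' (subsetDl U [set v]).
have sBU : B \subset U := subset_trans (subsetDl _ _) (subsetDl U [set v]).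
have vA : v \notin A by apply: contraTN vU => /(subsetP sAU'); rewrite !inE eqxx.
have vB : v \notin B by rewrite !inE eqxx andbF.
have B0 : B != set0.
  apply: contra AU'; rewrite /B setD_eq0 => sU'A.
  by rewrite eqEsubset sAU' sU'A.
have partU w : w \in U -> [|| w == v, w \in A | w \in B].
  by move=> wU; rewrite !inE wU andbT; case: eqVneq; case: (w \in A).
have partU' w : w \in U -> [|| w == v, w \in B | w \in A].
  by case/partU/or3P=> ->; rewrite ?orbT.
have noBA x y : x \in B -> y \in A -> ~~ e x y.
  by move=> xB yA; rewrite e_sym; apply: noAB.
have Uv : U != [set v].
  case/set0Pn: A0 => y yA; apply/eqP => Uv.
  by move: (subsetP sAU y yA); rewrite Uv inE => /eqP yv; rewrite -yv yA in vA.
have [x0 x0Uv vx0] := exists_nonnbr U_coconn vU Uv.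
have /setD1P[_ x0U] := x0Uv.
case/or3P: (partU x0 x0U) => [/eqP x0v|x0A|x0B].
- by move: x0Uv; rewrite x0v !inE eqxx.
- have [z zB vz] := exists_nbr_in_part U_conn sBU B0 vU vB partU' noBA.
  by apply: U_conn; apply: (separates_nonnbrs vU vA vB sAU partU noAB x0A vx0 zB vz).
- have [z zA vz] := exists_nbr_in_part U_conn sAU A0 vU vA partU noAB.
  by apply: U_conn; apply: (separates_nonnbrs vU vB vA sBU partU' noBA x0B vx0 zA vz).
Qed.
End Decomposition.

Lemma separates_pair (T : finType) (e : rel T) x y :
  x != y -> ~~ e x y -> separates e [set x; y] [set x].
Proof.
move=> xy exy; split.
- by rewrite sub1set !inE eqxx.
- by apply/set0Pn; exists x; rewrite inE.
- by apply/eqP => /setP/(_ y); rewrite !inE eqxx orbT eq_sym (negbTE xy).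
- move=> u w /set1P-> /setDP[]; rewrite !inE.
  by case/orP=> /eqP->; rewrite ?eqxx.
Qed.

Lemma cograph_decomposition (T : finType) (e : rel T) (U : {set T}) :
  symmetric e -> irreflexive e -> P4_free e -> 1 < #|U| ->
  (exists A, separates e U A) \/ (exists A, separates (compl_graph e) U A).
Proof.
move=> e_sym e_irr e_P4; have [n] := ubnP #|U|; elim: n U => // n IHn U.
rewrite ltnS => Un U1.
have [U2|U2] := leqP #|U| 2.
  have /cards2P[x [y [xy ->]]] : #|U| == 2 by rewrite eqn_leq U2 U1.
  case exy: (e x y); [right | left]; exists [set x]; apply: separates_pair => //.
    by rewrite /compl_graph xy exy.
  by rewrite exy.
have [v vU] : exists v, v \in U by apply/set0Pn; rewrite -card_gt0; lia.
have cardUv : #|U :\ v| = #|U|.-1 by rewrite (cardsD1 v U) vU.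
have [[A sepA]|[A sepA]] := IHn (U :\ v) ltac:(lia) ltac:(lia).
  exact: separates_insert sepA.
have := separates_insert (compl_graph_sym e_sym) (P4_free_compl e_sym e_P4) vU sepA.
by rewrite compl_graphK //; case; [right | left].
Qed.

(** * Upper bound *)

(* With a = p m + r and b = q m + s this is p q m + p s + q r = (a b - r s) / m. *)
Definition extremal_order m a b :=
  a %/ m * (b %/ m) * m + a %/ m * (b %% m) + b %/ m * (a %% m).

Lemma extremal_order_mul m a b : 0 < m ->
  m * extremal_order m a b + a %% m * (b %% m) = a * b.
Proof.
move=> m_gt0; rewrite [in RHS](divn_eq a m) [in RHS](divn_eq b m) /extremal_order.
by move: (a %/ m) (a %% m) (b %/ m) (b %% m) => p r q s; nia.
Qed.

Lemma extremal_orderE m a b : 0 < m ->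
  (a * b - a %% m * (b %% m)) %/ m = extremal_order m a b.
Proof. by move=> m_gt0; rewrite -(extremal_order_mul a b m_gt0) addnK mulKn. Qed.

Lemma extremal_orderC m a b : extremal_order m a b = extremal_order m b a.
Proof. by rewrite /extremal_order; move: (a %/ m) (b %/ m) (a %% m) (b %% m) => p q r s; lia. Qed.

(* m F(a, b) = a b - r s, and the residue of b1 + b2 is at most the sum of the
   residues of b1 and b2. *)
Lemma extremal_order_superadditive m a b1 b2 : 0 < m ->
  extremal_order m a b1 + extremal_order m a b2 <= extremal_order m a (b1 + b2).
Proof.
move=> m_gt0; rewrite -(leq_pmul2l m_gt0).
have := extremal_order_mul a b1 m_gt0; have := extremal_order_mul a b2 m_gt0.
have := extremal_order_mul a (b1 + b2) m_gt0.
have : (b1 + b2) %% m <= b1 %% m + b2 %% m by rewrite -modnDm leq_mod.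
move/(leq_mul (leqnn (a %% m))).
move: (extremal_order m a (b1 + b2)) (extremal_order m a b1) (extremal_order m a b2) => F F1 F2.
move: (a %% m) ((b1 + b2) %% m) (b1 %% m) (b2 %% m) => r s s1 s2; nia.
Qed.

Lemma leq_extremal_order m a b : 0 < m -> m <= a -> b <= extremal_order m a b.
Proof.
move=> m_gt0 ma; have : 0 < a %/ m by rewrite divn_gt0.
rewrite /extremal_order {1}(divn_eq b m).
by move: (a %/ m) (b %/ m) (a %% m) (b %% m) => p q r s; nia.
Qed.

Lemma separates_sparse_le (T : finType) (e : rel T) k U A b :
  symmetric e -> separates e U A -> sparse_le e k U b ->
  exists b1, [/\ b1 <= b, sparse_le e k A b1 & sparse_le e k (U :\: A) (b - b1)].
Proof.
move=> e_sym [sAU _ _ noedge] spU.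
pose P (S : {set T}) := (S \subset A) && sparse e k S.
have P0 : P set0 by rewrite /P sub0set sparse0.
have [S1 /andP[sS1A spS1] maxS1] := @arg_maxnP _ set0 P (fun S => #|S|) P0.
have sS1U := subset_trans sS1A sAU.
exists #|S1|; split; first exact: spU.
  by move=> S sSA spS; apply: maxS1; rewrite /P sSA.
move=> S2 sS2 spS2.
have noS12 x y : x \in S1 -> y \in S2 -> ~~ e x y.
  by move=> /(subsetP sS1A) xA /(subsetP sS2) yB; apply: noedge.
have disj : S1 :&: S2 = set0.
  apply/setP => x; rewrite !inE; apply/negbTE/andP => -[/(subsetP sS1A) xA].
  by move/(subsetP sS2); rewrite inE xA.
have := spU (S1 :|: S2) _ (sparseU e_sym noS12 spS1 spS2).
rewrite subUset sS1U (subset_trans sS2 (subsetDl U A)) cardsU disj cards0.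
by move=> /(_ isT); lia.
Qed.

Lemma card_le_separated (T : finType) (e : rel T) k U A a b :
  symmetric e -> separates e U A ->
  (forall (V : {set T}) c, #|V| < #|U| -> sparse_le e k V c -> sparse_le (compl_graph e) k V a ->
     #|V| <= extremal_order k.+1 a c) ->
  sparse_le e k U b -> sparse_le (compl_graph e) k U a -> #|U| <= extremal_order k.+1 a b.
Proof.
move=> e_sym sepA IH spU dnU; have [sAU A0 AU _] := sepA.
have [b1 [b1b spA spB]] := separates_sparse_le e_sym sepA spU.
have cardU : #|U| = #|A| + #|U :\: A| by rewrite -(cardsID A U) (setIidPr sAU).
have A_gt0 : 0 < #|A| by rewrite card_gt0.
have B_gt0 : 0 < #|U :\: A|.
  by rewrite card_gt0; apply: contra AU; rewrite setD_eq0 eqEsubset sAU.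
have ltA : #|A| < #|U| by lia.
have ltB : #|U :\: A| < #|U| by lia.
have cardA := IH A b1 ltA spA (sparse_leS sAU dnU).
have cardB := IH _ _ ltB spB (sparse_leS (subsetDl U A) dnU).
rewrite cardU (leq_trans (leq_add cardA cardB)) //.
by rewrite -{2}(subnKC b1b) extremal_order_superadditive.
Qed.

Lemma cograph_card_le (T : finType) (e : rel T) k U a b :
  symmetric e -> irreflexive e -> P4_free e -> k < a ->
  sparse_le e k U b -> sparse_le (compl_graph e) k U a -> #|U| <= extremal_order k.+1 a b.
Proof.
have [n] := ubnP #|U|; elim: n => // n IHn in e U a b *.
rewrite ltnS => Un e_sym e_irr e_P4 ka spU dnU.
have [bk|kb] := leqP b k.
  exact: leq_trans (sparse_le_card e_irr spU bk) (leq_extremal_order _ _ ka).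
have [U1|U2] := leqP #|U| 1.
  by apply: leq_trans U1 (leq_trans _ (leq_extremal_order b _ ka)); lia.
have [[A sepA]|[A sepA]] := cograph_decomposition e_sym e_irr e_P4 U2.
  apply: (card_le_separated e_sym sepA) spU dnU => V c VU spV dnV.
  by apply: (IHn e) => //; apply: leq_trans VU Un.
have ce_sym := compl_graph_sym e_sym; rewrite extremal_orderC.
apply: (card_le_separated ce_sym sepA) dnU _; last by rewrite compl_graphK.
move=> V c VU dnV spV.
apply: (IHn _ _ _ _ _ ce_sym (@compl_graph_irr _ e) (P4_free_compl e_sym e_P4) kb dnV spV).
exact: leq_trans VU Un.
Qed.

(** * Extremal cographs *)

Section SplitBlocks.
Variables q r m s : nat.

(* q disjoint copies of the join of a clique K_r on the vertices (c, inl _)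
   with m independent vertices (c, inr _), beside a clique K_s on inr _. *)
Definition blocks_vertex : finType := (('I_q * ('I_r + 'I_m)) + 'I_s)%type.

Definition block_of (x : blocks_vertex) : 'I_q + unit :=
  if x is inl (c, _) then inl c else inr tt.

Definition independent (x : blocks_vertex) : bool :=
  if x is inl (_, inr _) then true else false.

Definition blocks_rel : rel blocks_vertex := fun x y =>
  [&& x != y, block_of x == block_of y & ~~ (independent x && independent y)].

Lemma card_blocks_vertex : #|blocks_vertex| = q * (r + m) + s.
Proof. by rewrite card_sum card_prod card_sum !card_ord. Qed.

Lemma blocks_sym : symmetric blocks_rel.
Proof.
by move=> x y; rewrite /blocks_rel [y == x]eq_sym [block_of y == _]eq_sym [independent y && _]andbC.
Qed.

Lemma blocks_irr : irreflexive blocks_rel.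
Proof. by move=> x; rewrite /blocks_rel eqxx. Qed.

(* In an induced path a-b-c-d all four vertices share a block, and the
   non-edges a-c and b-d force a and b to be independent. *)
Lemma blocks_P4_free : P4_free blocks_rel.
Proof.
move=> [a [b [c [d [abcd /and3P[ab bc cd] /and3P[ac bd _]]]]]].
move: abcd; rewrite /= !inE !negb_or andbT.
case/and3P=> [/and3P[a_b a_c _] /andP[b_c b_d] c_d].
move: ab bc cd ac bd; rewrite /blocks_rel a_b a_c b_c b_d c_d /=.
case/andP=> /eqP-> Iab /andP[/eqP-> _] /andP[/eqP-> _].
by rewrite eqxx /= !negbK => /andP[Ia _] /andP[Ib _]; rewrite Ia Ib in Iab.
Qed.

Lemma blocks_sparse_le k : m <= k.+1 -> sparse_le blocks_rel k setT (q * k.+1 + s).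
Proof.
move=> mk; pose bnd (j : 'I_q + unit) := if j is inl _ then k.+1 else s.
have -> : q * k.+1 + s = \sum_j bnd j.
  by rewrite big_sumType /= !sum_nat_const card_ord card_unit; lia.
apply: (sparse_le_classes (L := block_of)) => -[c|[]] X sX spX /=.
- have inblock x : x \in X -> block_of x = inl c.
    by move/(subsetP sX); rewrite inE => /eqP.
  have [/exists_inP[x0 x0X ind0]|/exists_inPn allind] :=
    boolP [exists x in X, ~~ independent x].
    apply: (card_sparse_universal spX x0X) => y yX yx0.
    by rewrite /blocks_rel eq_sym yx0 (inblock _ x0X) (inblock _ yX) eqxx /= negb_and ind0.
  apply: leq_trans mk; apply: (card_le_image (f := fun z => inl (c, inr z))) => x xX.
  have := allind x xX; have := inblock x xX.
  by case: x {xX} => [[c' [z|z]]|z] //= [->] _; exists z.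
- apply: (card_le_image (f := inr)) => x /(subsetP sX); rewrite inE.
  by case: x => [[]|z] //; exists z.
Qed.

Lemma blocks_dense_le k : s <= k -> sparse_le (compl_graph blocks_rel) k setT (k.+1 + r).
Proof.
move=> sk S _ dnS.
have clique_nbrs c w : inl (c, w) \in S ->
    (forall y, y \in S -> blocks_rel (inl (c, w)) y -> ~~ independent y) ->
    #|S| <= k.+1 + r.
  move=> uS nonind; apply: leq_trans (card_dense_nbrs dnS uS) _; rewrite leq_add2l.
  apply: (card_le_image (f := fun z => inl (c, inl z))) => y; rewrite inE.
  case/andP=> yS uy; have := nonind y yS uy; move: uy; rewrite /blocks_rel.
  by case: y {yS} => [[c' [z|z]]|z] //= /and3P[_ /eqP[->] _] _; exists z.
have [/exists_inP[u uS ind_u]|/exists_inPn noind] := boolP [exists u in S, independent u].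
  case: u uS ind_u => [[c w]|z] // uS ind_u; apply: (clique_nbrs c w uS) => y _.
  by rewrite /blocks_rel ind_u /= => /and3P[].
have [/exists_inP[u uS]|/exists_inPn inK] := boolP [exists u in S, block_of u != inr tt].
  case: u uS => [[c w]|z] // uS _.
  by apply: (clique_nbrs c w uS) => y yS _; apply: noind.
apply: (@leq_trans s); last by lia.
apply: (card_le_image (f := inr)) => x xS; have := inK x xS.
by case: x {xS} => [[c w]|z] //= _; exists z.
Qed.
End SplitBlocks.

Section CliquesBesideComplement.
Variables (q a : nat) (W : finType) (eW : rel W).

(* q disjoint cliques K_a on inl _, beside the complement of eW on inr _. *)
Definition cliques_vertex : finType := (('I_q * 'I_a) + W)%type.

Definition clique_of (x : cliques_vertex) : 'I_q + unit :=
  if x is inl (c, _) then inl c else inr tt.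

Definition cliques_rel : rel cliques_vertex := fun x y =>
  match x, y with
  | inl (c, _), inl (c', _) => (x != y) && (c == c')
  | inr w, inr w' => compl_graph eW w w'
  | _, _ => false
  end.

Lemma card_cliques_vertex : #|cliques_vertex| = q * a + #|W|.
Proof. by rewrite card_sum card_prod !card_ord. Qed.

Lemma cliques_sym : symmetric eW -> symmetric cliques_rel.
Proof.
move=> eW_sym [[c i]|w] [[c' i']|w'] //=; first by rewrite eq_sym (eq_sym c).
exact: compl_graph_sym.
Qed.

Lemma cliques_irr : irreflexive cliques_rel.
Proof. by move=> [[c i]|w] /=; rewrite ?eqxx // compl_graph_irr. Qed.

Lemma cliques_rel_class x y : cliques_rel x y -> clique_of x = clique_of y.
Proof. by case: x y => [[c i]|w] [[c' i']|w'] //= /andP[_ /eqP ->]. Qed.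

Lemma cliques_P4_free : symmetric eW -> P4_free eW -> P4_free cliques_rel.
Proof.
move=> eW_sym eW_P4 [x [y [z [w [xyzw /and3P[xy yz zw] /and3P[xz yw xw]]]]]].
case: x y z w xyzw xy yz zw xz yw xw => [[c1 i1]|w1] [[c2 i2]|w2] [[c3 i3]|w3] [[c4 i4]|w4] //=.
  rewrite !inE !negb_or andbT => /and3P[/and3P[_ x_z _] _ _].
  move=> /andP[_ /eqP c12] /andP[_ /eqP c23] _.
  by rewrite c12 c23 in x_z *; rewrite x_z eqxx.
move=> xyzw xy yz zw xz yw xw.
apply: (P4_free_compl eW_sym eW_P4); exists w1, w2, w3, w4; split.
- by move: xyzw; rewrite /= !inE.
- by rewrite xy yz zw.
- by rewrite xz yw xw.
Qed.

Lemma cliques_sparse_le k bW :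
  sparse_le (compl_graph eW) k setT bW -> sparse_le cliques_rel k setT (q * k.+1 + bW).
Proof.
move=> spW; pose bnd (j : 'I_q + unit) := if j is inl _ then k.+1 else bW.
have -> : q * k.+1 + bW = \sum_j bnd j.
  by rewrite big_sumType /= !sum_nat_const card_ord card_unit; lia.
apply: (sparse_le_classes (L := clique_of)) => -[c|[]] X sX spX /=.
- have [->|[x0 x0X]] := set_0Vmem X; first by rewrite cards0.
  apply: (card_sparse_universal spX x0X) => y yX yx0.
  move: x0X yX yx0 => /(subsetP sX) + /(subsetP sX); rewrite !inE.
  case: x0 => [[c0 i0]|w0] // /eqP[->]; case: y => [[c' i']|w'] // /eqP[->] yx0 /=.
  by rewrite eqxx andbT eq_sym.
- apply: (card_sparse_inr _ spW spX) => // x /(subsetP sX); rewrite inE.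
  by case: x => [[]|w] //; exists w.
Qed.

Lemma cliques_dense_le k bW :
  irreflexive eW -> sparse_le eW k setT bW -> bW <= a -> k + k <= a ->
  sparse_le (compl_graph cliques_rel) k setT a.
Proof.
move=> eW_irr spW bWa kka S _ dnS.
have [/exists_inP[x xS /exists_inP[y yS xy]]|/exists_inPn one_class] :=
  boolP [exists x in S, exists y in S, clique_of x != clique_of y].
  exact: leq_trans (card_dense_across cliques_rel_class dnS xS yS xy) kka.
have same x y : x \in S -> y \in S -> clique_of x = clique_of y.
  by move=> xS yS; move/exists_inPn: (one_class x xS) => /(_ y yS) /negbNE /eqP.
have [->|[x0 x0S]] := set_0Vmem S; first by rewrite cards0.
case: x0 x0S => [[c0 i0]|w0] x0S.
  apply: (card_le_image (f := fun z => inl (c0, z))) => x xS.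
  by move: (same _ _ x0S xS); case: x {xS} => [[c i]|w] //= [->]; exists i.
apply: leq_trans bWa; apply: (card_sparse_inr _ spW dnS) => [w w'|x xS].
  by rewrite -[eW in RHS](compl_graphK eW_irr).
by move: (same _ _ x0S xS); case: x {xS} => [[c i]|w] //= _; exists w.
Qed.
End CliquesBesideComplement.

Lemma sparse_le_of_no_sparse_set n (e : rel 'I_n) k b :
  ~ (exists S, k_sparse_set e k b.+1 S) -> sparse_le e k setT b.
Proof.
move=> no_sparse S _ spS; rewrite leqNgt; apply/negP => /exists_subset_card[S' sS'S cardS'].
by apply: no_sparse; exists S'; split => //; apply/forall_inP; apply: sparseS spS.
Qed.

Lemma ramsey_upper k a b : k < a ->
  ramsey_prop_cograph k a.+1 b.+1 (extremal_order k.+1 a b).+1.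
Proof.
move=> ka e [e_sym e_irr] e_P4.
have [|no_dense] := classic (exists S, k_dense_set e k a.+1 S); first by left.
right; apply: NNPP => no_sparse.
have := cograph_card_le e_sym e_irr e_P4 ka (sparse_le_of_no_sparse_set no_sparse)
  (sparse_le_of_no_sparse_set no_dense).
by rewrite cardsT card_ord ltnn.
Qed.

Lemma not_ramsey_prop_of_graph (T : finType) (e : rel T) k a b n :
  symmetric e -> irreflexive e -> P4_free e ->
  sparse_le e k setT b -> sparse_le (compl_graph e) k setT a -> n <= #|T| ->
  ~ ramsey_prop_cograph k a.+1 b.+1 n.
Proof.
move=> e_sym e_irr e_P4 spT dnT nT ramsey.
pose h (i : 'I_n) := enum_val (widen_ord nT i).
have h_inj : injective h by move=> x y /enum_val_inj [] /val_inj.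
pose e' x y := e (h x) (h y).
have e'_compl x y : compl_rel e' x y = compl_graph e (h x) (h y).
  by rewrite /compl_rel /compl_graph (inj_eq h_inj).
have [||[S [cardS /forall_inP dnS]]|[S [cardS /forall_inP spS]]] := ramsey e'.
- by split=> [x y|x]; rewrite /e'; [apply: e_sym | apply: e_irr].
- case=> x [y [z [w [xyzw edges nonedges]]]]; apply: e_P4.
  exists (h x), (h y), (h z), (h w); split=> //.
  by rewrite -(map_inj_uniq h_inj) in xyzw.
- have := dnT _ (subsetT _) (sparse_imset h_inj e'_compl dnS).
  by rewrite card_imset // cardS ltnn.
- have := spT _ (subsetT _) (sparse_imset (e' := e) h_inj (fun _ _ => erefl) spS).
  by rewrite card_imset // cardS ltnn.
Qed.

Lemma ramsey_lower k a b n : k < a -> k < b -> n <= extremal_order k.+1 a b ->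
  ~ ramsey_prop_cograph k a.+1 b.+1 n.
Proof.
move=> ka kb; rewrite /extremal_order.
have := divn_eq a k.+1; have := divn_eq b k.+1.
have : a %% k.+1 <= k by rewrite -ltnS ltn_pmod.
have : b %% k.+1 <= k by rewrite -ltnS ltn_pmod.
have : 0 < a %/ k.+1 by rewrite divn_gt0.
have : 0 < b %/ k.+1 by rewrite divn_gt0.
move: (a %/ k.+1) (a %% k.+1) (b %/ k.+1) (b %% k.+1) => p r q s.
move=> q_gt0 p_gt0 sk rk eb ea n_le.
have [p1|p2] := leqP p 1.
  apply: (@not_ramsey_prop_of_graph _ (@blocks_rel q r k.+1 s)).
  - exact: blocks_sym.
  - exact: blocks_irr.
  - exact: blocks_P4_free.
  - by apply: sparse_leW (blocks_sparse_le (leqnn _)); lia.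
  - by apply: sparse_leW (blocks_dense_le sk); nia.
  - by rewrite card_blocks_vertex; nia.
case: q q_gt0 eb n_le => // q _ eb n_le.
apply: (@not_ramsey_prop_of_graph _ (@cliques_rel q a _ (@blocks_rel p s k.+1 r))).
- exact/cliques_sym/blocks_sym.
- exact: cliques_irr.
- exact/cliques_P4_free/blocks_P4_free/blocks_sym.
- by apply: sparse_leW (cliques_sparse_le (blocks_dense_le rk)); nia.
- by apply: (cliques_dense_le (@blocks_irr p s k.+1 r) (blocks_sparse_le (leqnn _))); nia.
- by rewrite card_cliques_vertex card_blocks_vertex; nia.
Qed.

Theorem theorem7p2 (k i j : nat) (hi : k + 2 <= i) (hj : k + 2 <= j) :
  is_ramsey_cograph k i j
    (1 + ((i - 1) * (j - 1) - ((i - 1) %% (k + 1)) * ((j - 1) %% (k + 1))) %/ (k + 1)).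
Proof.
case: i hi => [|a] hi; first by lia.
case: j hj => [|b] hj; first by lia.
have ka : k < a by lia.
have kb : k < b by lia.
rewrite !subn1 /= addn1 extremal_orderE // add1n.
split; first exact: ramsey_upper.
by move=> n; rewrite ltnS; apply: ramsey_lower.
Qed.
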